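(* Let $\mathbb{T}$ be a time scale with $0\in\mathbb{T}_\kappa^\kappa$, let $\alpha\in]0,1]$, and let $f:\mathbb{T}\to\mathbb{R}$, $f(t)=|t|$. Then $$f^{\diamondsuit^\alpha}(0)=\begin{cases}0&\text{if }0\text{ is dense},\\ \dfrac{\sigma(0)+\rho(0)}{[\sigma(0)-\rho(0)]^\alpha}&\text{otherwise}.\end{cases}$$
   Context: A time scale $\mathbb{T}$ is a nonempty closed subset of $\mathbb{R}$. $\sigma(t)=\inf\{s\in\mathbb{T}:s>t\}$ ($\inf\emptyset=\sup\mathbb{T}$), $\rho(t)=\sup\{s\in\mathbb{T}:s<t\}$ ($\sup\emptyset=\inf\mathbb{T}$); $f^\sigma=f\circ\sigma$, $f^\rho=f\circ\rho$. A point $t$ is dense if $\sigma(t)=t=\rho(t)$. $\mathbb{T}^\kappa=\mathbb{T}\setminus\{\sup\mathbb{T}\}$ if $\sup\mathbb{T}$ is finite and left-scattered, else $\mathbb{T}$; $\mathbb{T}_\kappa=\mathbb{T}\setminus\{\inf\mathbb{T}\}$ if $\inf\mathbb{T}$ is finite and right-scattered, else $\mathbb{T}$; $\mathbb{T}_\kappa^\kappa=\mathbb{T}_\kappa\cap\mathbb{T}^\kappa$. Symmetric fractional derivative of order $\alpha$ at $t\in\mathbb{T}_\kappa^\kappa$: the real number $f^{\diamondsuit^\alpha}(t)$ (if it exists) such that for every $\varepsilon>0$ there is a neighborhood $U\subset\mathbb{T}$ of $t$ with $\big|[f^\sigma(t)-f(s)+f(2t-s)-f^\rho(t)]-f^{\diamondsuit^\alpha}(t)[\sigma(t)+2t-2s-\rho(t)]^\alpha\big|\le\varepsilon|\sigma(t)+2t-2s-\rho(t)|^\alpha$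 for all $s\in U$ with $2t-s\in U$. *)

From mathcomp Require Import all_boot all_order all_algebra.
From mathcomp Require Import all_classical all_reals all_analysis.
Set Implicit Arguments. Unset Strict Implicit. Unset Printing Implicit Defensive.
Import Order.TTheory GRing.Theory Num.Theory.
Import numFieldNormedType.Exports.
Local Open Scope classical_set_scope.
Local Open Scope ring_scope.

Definition time_scale {R : realType} (T : set R) : Prop :=
  T !=set0 /\ closed T.

Definition sigma {R : realType} (T : set R) (t : R) : R :=
  let A := [set s | T s /\ t < s] in
  if `[< A = set0 >] then sup T else inf A.

Definition rho {R : realType} (T : set R) (t : R) : R :=
  let A := [set s | T s /\ s < t] in
  if `[< A = set0 >] then inf T else sup A.

Definition dense_pt {R : realType} (T : set R) (t : R) : Prop :=
  sigma T t = t /\ rho T t = t.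

(* T^kappa: remove sup T if it is finite (T bounded above) and left-scattered *)
Definition T_up_kappa {R : realType} (T : set R) (t : R) : Prop :=
  T t /\ ~ (has_ubound T /\ t = sup T /\ rho T (sup T) < sup T).

(* T_kappa: remove inf T if it is finite (T bounded below) and right-scattered *)
Definition T_low_kappa {R : realType} (T : set R) (t : R) : Prop :=
  T t /\ ~ (has_lbound T /\ t = inf T /\ inf T < sigma T (inf T)).

Definition T_kk {R : realType} (T : set R) (t : R) : Prop :=
  T_low_kappa T t /\ T_up_kappa T t.

(* D is the symmetric fractional derivative of order alpha of f at t:
   for every eps > 0 there is a neighborhood U of t (relative to T, i.e. U `&` T
   with U a neighborhood of t in R) such that for all s in U with 2t - s in U
   the defining inequality holds. *)
Definition sym_frac_deriv {R : realType} (T : set R) (alpha : R)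
    (f : R -> R) (t D : R) : Prop :=
  forall eps : R, 0 < eps ->
  exists U : set R, nbhs t U /\
    forall s : R, T s -> U s -> T (2 * t - s) -> U (2 * t - s) ->
      `| (f (sigma T t) - f s + f (2 * t - s) - f (rho T t))
         - D * (sigma T t + 2 * t - 2 * s - rho T t) `^ alpha |
      <= eps * `| sigma T t + 2 * t - 2 * s - rho T t | `^ alpha.

From mathcomp Require Import all_boot all_order all_algebra.
From mathcomp Require Import all_classical all_reals all_analysis.
Set Implicit Arguments. Unset Strict Implicit. Unset Printing Implicit Defensive.
Import Order.TTheory GRing.Theory Num.Theory.
Import numFieldNormedType.Exports.
Local Open Scope classical_set_scope.
Local Open Scope ring_scope.

(* Since sigma 0 >= 0 >= rho 0, the increment of |.| is sigma 0 + rho 0 for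
   every s, because |s| = |-s|.  At a dense point this is 0.  Otherwise T has
   no point in the gaps (rho 0, 0) and (0, sigma 0), so a point s with s and -s
   in T is 0 or satisfies |s| >= max (sigma 0) (- rho 0) > 0; on a ball of that
   radius only s = 0 remains, where the defining inequality is an equality. *)

Section Jumps.
Variables (R : realType) (T : set R).

Lemma sigma_ge t : T t -> t <= sigma T t.
Proof.
move=> Tt; rewrite /sigma; case: asboolP => [A0|/eqP/set0P A0].
- have ubT : ubound T t.
    move=> y Ty; rewrite leNgt; apply/negP => ty.
    by have : [set s | T s /\ t < s] y by []; rewrite A0.
  exact: ub_le_sup (ex_intro _ t ubT) _ Tt.
- by apply: lb_le_inf A0 _ => y [_ /ltW].
Qed.

Lemma sigma_le t s : T s -> t < s -> sigma T t <= s.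
Proof.
move=> Ts ts; rewrite /sigma; case: asboolP => [A0|_].
- by have : [set s | T s /\ t < s] s by []; rewrite A0.
- by apply: ge_inf => //; exists t => y [_ /ltW].
Qed.

Lemma rho_le t : T t -> rho T t <= t.
Proof.
move=> Tt; rewrite /rho; case: asboolP => [A0|/eqP/set0P A0].
- have lbT : lbound T t.
    move=> y Ty; rewrite leNgt; apply/negP => yt.
    by have : [set s | T s /\ s < t] y by []; rewrite A0.
  exact: ge_inf (ex_intro _ t lbT) _ Tt.
- by apply: ge_sup A0 _ => y [_ /ltW].
Qed.

Lemma rho_ge t s : T s -> s < t -> s <= rho T t.
Proof.
move=> Ts st; rewrite /rho; case: asboolP => [A0|_].
- by have : [set s | T s /\ s < t] s by []; rewrite A0.
- by apply: ub_le_sup => //; exists t => y [_ /ltW].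
Qed.

Lemma jump_gap0_le_norm s : T s -> T (- s) -> s != 0 ->
  Num.max (sigma T 0) (- rho T 0) <= `|s|.
Proof.
move=> Ts Tns; rewrite ge_max; case: (ltgtP s 0) => [s_lt0|s_gt0|//] _.
- rewrite ltr0_norm // lerN2 rho_ge // andbT.
  by apply: sigma_le; rewrite ?oppr_gt0.
- rewrite gtr0_norm // sigma_le //= lerNl rho_ge //.
  by rewrite oppr_lt0.
Qed.

Lemma nondense_jump_gap0 : T 0 -> ~ dense_pt T 0 ->
  0 < Num.max (sigma T 0) (- rho T 0).
Proof.
move=> T0 nd; rewrite lt_max oppr_gt0.
rewrite !lt_neqAle sigma_ge // rho_le // !andbT.
apply: contra_notT nd => /norP[/negPn/eqP sigma0 /negPn/eqP rho0].
by split; rewrite // -sigma0.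
Qed.

End Jumps.

Lemma sym_frac_deriv_exact (R : realType) (T U : set R) (alpha : R)
    (f : R -> R) (t D : R) :
  nbhs t U ->
  (forall s, T s -> U s -> T (2 * t - s) -> U (2 * t - s) ->
     f (sigma T t) - f s + f (2 * t - s) - f (rho T t)
     = D * (sigma T t + 2 * t - 2 * s - rho T t) `^ alpha) ->
  sym_frac_deriv T alpha f t D.
Proof.
move=> Ut exact_U eps eps_gt0; exists U; split => // s Ts Us Tts Uts.
rewrite exact_U // subrr normr0.
by rewrite mulr_ge0 ?powR_ge0 ?ltW.
Qed.

Lemma abs_sym_increment0 (R : realDomainType) (a b s : R) :
  0 <= a -> b <= 0 -> `|a| - `|s| + `|2 * 0 - s| - `|b| = a + b.
Proof.
move=> a_ge0 b_le0.
by rewrite mulr0 sub0r normrN subrK ger0_norm // ler0_norm // opprK.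
Qed.

Theorem proposition3p25 (R : realType) (T : set R) (alpha : R) :
  time_scale T -> T_kk T 0 -> 0 < alpha <= 1 ->
  (dense_pt T 0 -> sym_frac_deriv T alpha (fun x => `|x|) 0 0) /\
  (~ dense_pt T 0 ->
     sym_frac_deriv T alpha (fun x => `|x|) 0
       ((sigma T 0 + rho T 0) / (sigma T 0 - rho T 0) `^ alpha)).
Proof.
move=> _ [[T0 _] _] _.
have sigma0 := sigma_ge T0; have rho0 := rho_le T0.
split => [[sigma_eq0 rho_eq0] | nd].
  apply: (@sym_frac_deriv_exact _ _ setT) => [|s *]; first exact: filterT.
  by rewrite abs_sym_increment0 // sigma_eq0 rho_eq0 addr0 mul0r.
have gap := nondense_jump_gap0 T0 nd.
apply: (sym_frac_deriv_exact (nbhsx_ballx (0 : R) _ gap)) => s Ts Us Tms _.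
have -> : s = 0.
  rewrite mulr0 sub0r in Tms; case: (eqVneq s 0) => // s_neq0.
  by move: Us; rewrite /ball /= sub0r normrN ltNge jump_gap0_le_norm.
have width_gt0 : 0 < sigma T 0 - rho T 0.
  by apply: lt_le_trans gap _; rewrite ge_max lerDl oppr_ge0 rho0 lerDr sigma0.
rewrite abs_sym_increment0 // !mulr0 subr0 addr0 divfK //.
by rewrite gt_eqF ?powR_gt0.
Qed.
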